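(* Let $f\in\mathbb Z[X]$ be a reciprocal Salem polynomial, and let $g\in\mathbb Z[X]$ have degree less than $\deg f$ and be such that $f+g$ is reciprocal. For $\epsilon\in\mathbb R$ set $f_\epsilon=f+\epsilon g\in\mathbb R[X]$. Let $k\in\mathbb N$ be such that $f_\epsilon$ has only simple roots for all $\epsilon\in[0,k]$. Then $f_k$ is a reciprocal Salem polynomial.
   Context: A polynomial $f=f_0+\dots+f_nX^n$ ($f_n\ne0$) is reciprocal if $f_i=f_{n-i}$ for all $i$. A Salem polynomial is a monic $f\in\mathbb Z[X]$ having exactly one root $\lambda$ with $|\lambda|>1$, this root being simple. *)

From mathcomp Require Import all_boot all_algebra all_reals realfun.
From mathcomp Require Import complex.
Set Implicit Arguments. Unset Strict Implicit. Unset Printing Implicit Defensive.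
Import GRing.Theory Num.Theory.
Local Open Scope ring_scope.

Definition reciprocal (T : nzRingType) (p : {poly T}) : Prop :=
  p != 0 /\ forall i : nat, (i <= (size p).-1)%N -> p`_i = p`_((size p).-1 - i).

Definition polyR (R : realType) (p : {poly int}) : {poly R} :=
  map_poly (fun z : int => z%:~R) p.
Definition polyRC (R : realType) (p : {poly R}) : {poly R[i]} :=
  map_poly (fun x : R => x%:C%C) p.

Definition Salem (R : realType) (f : {poly int}) : Prop :=
  f \is monic /\
  exists lambda : R[i],
    [/\ root (polyRC (polyR R f)) lambda, 1 < `|lambda|,
        mup lambda (polyRC (polyR R f)) = 1%N &
        forall z : R[i], root (polyRC (polyR R f)) z -> 1 < `|z| -> z = lambda].

Definition only_simple_roots (R : realType) (p : {poly R}) : Prop :=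
  forall z : R[i], root (polyRC p) z -> mup z (polyRC p) = 1%N.

Definition f_eps (R : realType) (f g : {poly int}) (eps : R) : {poly R} :=
  polyR R f + eps *: polyR R g.

(* Each f_eps is reciprocal with real coefficients, so its complex roots are
   stable under the inversion w |-> 1 / conj w in the unit circle.  Near a
   parameter e0 where f_e0 has simple roots z_1, ..., z_n, the identity
   |f_e(z_j)| = prod_w |z_j - w| (w over the roots of f_e) together with
   |f_e(z_j)| = |e - e0| |g(z_j)| puts a root of f_e next to each z_j, and
   counting shows this matching is a bijection.  A root on the unit circle
   stays on it, since otherwise its mirror image would be a second root of
   f_e next to the same z_j; a root off the circle cannot cross it.  Hence
   "exactly one root outside the closed unit disc" is locally constant in e,
   and a supremum argument propagates it from e = 0 to e = k. *)

From mathcomp Require Import all_boot all_algebra all_reals realfun.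
From mathcomp Require Import complex.
From mathcomp Require Import order ring lra.
Import Order.TTheory GRing.Theory Num.Theory Normc.
Local Open Scope ring_scope.
Local Open Scope complex_scope.

Section ComplexModulus.
Context {R : rcfType}.
Implicit Types z w u : R[i].

Lemma normc_ge0 z : 0 <= normc z.
Proof. by case: z => a b; exact: sqrtr_ge0. Qed.

Lemma normc_eq0 z : (normc z == 0) = (z == 0).
Proof. by apply/eqP/eqP => [/eq0_normc | ->]; rewrite ?normc0. Qed.

Lemma normC_normc z : `|z| = (normc z)%:C.
Proof. by case: z. Qed.

Lemma ltc1_normc z : (1 < `|z|) = (1 < normc z).
Proof. by rewrite normC_normc -ltcR. Qed.

Lemma normcJ z : normc z^* = normc z.
Proof. by case: z => a b; rewrite /normc /= sqrrN. Qed.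

Lemma normc_real (x : R) : normc x%:C = `|x|.
Proof. by rewrite /normc /= expr0n addr0 sqrtr_sqr. Qed.

Lemma mulcJ_normc z : z * z^* = (normc z ^+ 2)%:C.
Proof. by rewrite -sqr_normc normC_normc rmorphXn. Qed.

Lemma normcB z w : normc (z - w) = normc (w - z).
Proof. by rewrite -normcN opprB. Qed.

Lemma normc_distD z w u : normc (z - u) <= normc (z - w) + normc (w - u).
Proof. by rewrite -[z - u](subrKA w) le_normcD. Qed.

Lemma normc_lerB_dist z w : normc z - normc w <= normc (z - w).
Proof. by rewrite lerBlDr -[z in normc z](subrK w) le_normcD. Qed.

Lemma normc_prod (I : Type) (s : seq I) (F : I -> R[i]) :
  normc (\prod_(i <- s) F i) = \prod_(i <- s) normc (F i).
Proof. exact: (big_morph _ (@normcM R) (normc1 R)). Qed.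

End ComplexModulus.

Lemma count_eq1P (T : eqType) (a : pred T) (s : seq T) : uniq s ->
  count a s = 1%N <-> exists l, [/\ l \in s, a l & forall x, x \in s -> a x -> x = l].
Proof.
move=> s_uniq; rewrite -size_filter; split.
  case Ea: (filter a s) => [|l []] // _.
  have /[!mem_filter] /andP[al ls] : l \in filter a s by rewrite Ea mem_head.
  exists l; split=> // x xs ax.
  by have /[!Ea] /[!inE] /eqP : x \in filter a s by rewrite mem_filter ax.
move=> [l [ls al l_uniq]].
rewrite size_filter (@eq_in_count _ _ (pred1 l)) ?count_uniq_mem ?ls //.
by move=> x xs /=; apply/idP/eqP => [/(l_uniq x xs) | ->].
Qed.

Lemma uniq_simple_roots {F : fieldType} (zs : seq F) :
  (forall z, z \in zs -> mup z (\prod_(w <- zs) ('X - w%:P)) = 1%N) -> uniq zs.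
Proof.
move=> simple; apply: count_mem_uniq => z.
have [zzs | /count_memPn -> //] := boolP (z \in zs).
by rewrite -mu_prod_XsubC simple.
Qed.

Lemma monic_prod_roots {F : closedFieldType} {p : {poly F}} :
  p \is monic -> {zs | p = \prod_(z <- zs) ('X - z%:P)}.
Proof.
move=> /monicP p_monic; have [zs pE] := closed_field_poly_normal p.
by exists zs; rewrite pE p_monic scale1r.
Qed.

Lemma size_polyDZl {T : nzRingType} {p q : {poly T}} (a : T) :
  (size q < size p)%N -> size (p + a *: q) = size p.
Proof.
by move=> q_small; rewrite size_polyDl // (leq_ltn_trans (size_scale_leq _ _)).
Qed.

Lemma monicDZl {T : nzRingType} {p q : {poly T}} (a : T) :
  p \is monic -> (size q < size p)%N -> p + a *: q \is monic.
Proof.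
move=> p_monic q_small; rewrite monicE lead_coefDl ?(monicP p_monic) //.
by rewrite (leq_ltn_trans (size_scale_leq _ _)).
Qed.

Section RootsNearby.
Context {R : rcfType}.
Local Notation C := R[i].

Definition one_outer_root (p : {poly C}) : Prop :=
  exists l, [/\ root p l, 1 < `|l| & forall z, root p z -> 1 < `|z| -> z = l].

Definition inversion_stable_roots (p : {poly C}) : Prop :=
  forall w, root p w -> root p (w^*)^-1.

Lemma one_outer_root_count (zs : seq C) : uniq zs ->
  one_outer_root (\prod_(z <- zs) ('X - z%:P)) <->
  count (fun z => 1 < normc z) zs = 1%N.
Proof.
move=> zs_uniq; rewrite count_eq1P //.
split=> -[l [lzs l1 lu]]; exists l; split.
- by rewrite -root_prod_XsubC.
- by rewrite -ltc1_normc.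
- by move=> z; rewrite -root_prod_XsubC -ltc1_normc; exact: lu.
- by rewrite root_prod_XsubC.
- by rewrite ltc1_normc.
- by move=> z; rewrite root_prod_XsubC ltc1_normc; exact: lu.
Qed.

Lemma exists_root_near (ws : seq C) z (rho : R) : 0 <= rho ->
  normc (\prod_(w <- ws) ('X - w%:P)).[z] < rho ^+ size ws ->
  exists2 w, w \in ws & normc (z - w) < rho.
Proof.
move=> rho_ge0 small; apply/hasP; apply: contraTT small => /hasPn far.
rewrite -leNgt horner_prod normc_prod.
have -> : rho ^+ size ws = \prod_(w <- ws) rho.
  by rewrite big_const_seq count_predT -Monoid.iteropE /= exprnP.
rewrite big_seq [X in _ <= X]big_seq; apply: ler_prod => w wws.
by rewrite hornerXsubC rho_ge0 leNgt far.
Qed.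

Lemma roots_matching (zs ws : seq C) (rho : R) :
  uniq zs -> size ws = size zs ->
  {in zs &, forall z1 z2, normc (z1 - z2) < rho *+ 2 -> z1 = z2} ->
  {in zs, forall z, exists2 w, w \in ws & normc (z - w) < rho} ->
  exists phi : C -> C, [/\ uniq ws, perm_eq ws (map phi zs)
                         & {in zs, forall z, normc (z - phi z) < rho}].
Proof.
move=> zs_uniq size_ws zs_sep near.
pose phi z := nth 0 ws (find (fun w => normc (z - w) < rho) ws).
have phiP z : z \in zs -> phi z \in ws /\ normc (z - phi z) < rho.
  move=> zzs; have hz : has (fun w => normc (z - w) < rho) ws.
    by apply/hasP; exact: near.
  by rewrite /phi mem_nth -?has_find ?(nth_find 0 hz).
have phi_inj : {in zs &, injective phi}.
  move=> z1 z2 z1s z2s e12; apply: zs_sep => //.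
  have [_ d1] := phiP _ z1s; have [_ d2] := phiP _ z2s.
  have := normc_distD z1 (phi z1) z2; rewrite e12 (normcB (phi z2)) in d1 *; lra.
have map_uniq : uniq (map phi zs) by rewrite map_inj_in_uniq.
have map_sub : {subset map phi zs <= ws}.
  by move=> _ /mapP[z zzs ->]; case: (phiP z zzs).
have map_size : (size ws <= size (map phi zs))%N by rewrite size_map size_ws.
have [_ map_eq] := uniq_min_size map_uniq map_sub map_size.
have ws_uniq : uniq ws by rewrite (uniq_size_uniq map_uniq map_eq) size_map size_ws.
exists phi; split=> //; last by move=> z /phiP[].
by apply: uniq_perm => // w; rewrite map_eq.
Qed.

Lemma root_separation_radius (zs : seq C) :
  exists rho : R, [/\ 0 < rho, rho <= 2^-1,
  {in zs &, forall z1 z2, normc (z1 - z2) < rho *+ 3 -> z1 = z2}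
  & {in zs, forall z, normc z != 1 -> rho <= `|normc z - 1|}].
Proof.
pose pairs := [seq (z1, z2) | z1 <- zs, z2 <- zs].
pose r1 := \big[Order.min/2^-1]_(x <- pairs | x.1 != x.2) (normc (x.1 - x.2) / 3%:R).
pose r2 := \big[Order.min/2^-1]_(z <- zs | normc z != 1) `|normc z - 1|.
exists (Order.min r1 r2); split.
- rewrite lt_min; apply/andP; split; apply: lt_bigmin; rewrite ?invr_gt0 //.
    by move=> x ne; rewrite divr_gt0 // lt0r normc_eq0 subr_eq0 ne normc_ge0.
  by move=> z ne; rewrite normr_gt0 subr_eq0.
- by rewrite ge_min bigmin_le_id.
- move=> z1 z2 z1s z2s; apply: contraTeq => ne; rewrite -leNgt.
  have r1_le : r1 <= normc (z1 - z2) / 3%:R.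
    exact: (ge_bigmin_seq _ (z1, z2) _ (fun x => normc (x.1 - x.2) / 3%:R)
              (allpairs_f _ z1s z2s)).
  have : Order.min r1 r2 <= r1 by rewrite ge_min lexx.
  rewrite ler_pdivlMr // in r1_le; lra.
- move=> z zzs ne; rewrite ge_min; apply/orP; right.
  exact: (ge_bigmin_seq _ z _ (fun z => `|normc z - 1|)).
Qed.

End RootsNearby.

Section OuterRootsStable.
Context {R : rcfType}.
Local Notation C := R[i].
Context {q : {poly C}} {zs : seq C} {phi : C -> C} {rho : R}.
Hypothesis q_inv : inversion_stable_roots q.
Hypothesis root_q : forall w, root q w = (w \in map phi zs).
Hypothesis rho_le : rho <= 2^-1.
Hypothesis zs_sep : {in zs &, forall z1 z2, normc (z1 - z2) < rho *+ 3 -> z1 = z2}.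
Hypothesis zs_off : {in zs, forall z, normc z != 1 -> rho <= `|normc z - 1|}.
Hypothesis phi_near : {in zs, forall z, normc (z - phi z) < rho}.

Lemma unit_root_stable z : z \in zs -> normc z = 1 -> normc (phi z) = 1.
Proof.
move=> zzs z1; set w := phi z; have zw := phi_near _ zzs; rewrite -/w in zw.
have w_gt : 2^-1 < normc w.
  by have := normc_lerB_dist z w; move: rho_le; rewrite z1; lra.
have w0 : w != 0 by rewrite -normc_eq0 gt_eqF // (lt_trans _ w_gt) ?invr_gt0.
have z0 : z != 0 by rewrite -normc_eq0 z1 oner_eq0.
have zJV : (z^*)^-1 = z.
  have zJ0 : z^* != 0 by rewrite conjc_eq0.
  by apply: (mulIf zJ0); rewrite mulVf ?conjc_eq0 // mulcJ_normc z1 expr1n.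
have /q_inv : root q w by rewrite root_q map_f.
rewrite root_q => /mapP[z' z's w'E].
have dist_wJV : normc ((w^*)^-1 - z) = normc (z - w) / normc w.
  have -> : (w^*)^-1 - z = (z - w)^* / (w^* * z^*).
    by rewrite -{1}zJV rmorphB /=; field; rewrite !conjc_eq0 w0 z0.
  by rewrite normcM normcV normcM !normcJ z1 mulr1.
(* (w^* )^-1 is a root of q within 2 rho of z, so it is matched to z too. *)
have z'E : z' = z.
  apply: zs_sep => //; have := normc_distD z' (w^*)^-1 z.
  have := phi_near _ z's; rewrite -w'E (normcB z') dist_wJV.
  have : normc (z - w) / normc w < rho *+ 2.
    by rewrite ltr_pdivrMr; [have := normc_ge0 (z - w); nra | lra].
  lra.
have wJV : (w^*)^-1 = w by rewrite w'E z'E.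
have : (normc w ^+ 2)%:C = 1%:C.
  by rewrite -mulcJ_normc -[X in X * _]wJV mulVf ?conjc_eq0.
by move=> /complexI/eqP; rewrite sqrp_eq1 ?normc_ge0 // => /eqP.
Qed.

Lemma outer_root_stable z : z \in zs -> (1 < normc (phi z)) = (1 < normc z).
Proof.
move=> zzs; have zw := phi_near _ zzs.
have [z1 | zn1] := eqVneq (normc z) 1; first by rewrite unit_root_stable // z1.
have := normc_lerB_dist z (phi z); have := normc_lerB_dist (phi z) z.
rewrite normcB; move: (zs_off _ zzs zn1); rewrite ler_normr.
by move=> /orP[] off ? ?; apply/idP/idP => ?; lra.
Qed.

End OuterRootsStable.

Lemma one_outer_root_perturb {R : rcfType} (p h : {poly R[i]}) :
  p \is monic -> (size h < size p)%N -> (forall z, root p z -> mup z p = 1%N) ->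
  (forall t : R, inversion_stable_roots (p + t%:C *: h)) ->
  exists2 d : R, 0 < d & forall t : R, `|t| < d ->
    (one_outer_root (p + t%:C *: h) <-> one_outer_root p).
Proof.
move=> p_monic h_small p_simple q_inv.
have [zs pE] := monic_prod_roots p_monic.
have zs_uniq : uniq zs.
  by apply: uniq_simple_roots => z zzs; rewrite -pE p_simple // pE root_prod_XsubC.
have [rho [rho_gt0 rho_le zs_sep zs_off]] := root_separation_radius zs.
pose M := 1 + \sum_(z <- zs) normc h.[z].
have h_le z : z \in zs -> normc h.[z] <= M.
  move=> zzs; rewrite /M (big_rem z zzs) /= addrCA lerDl addr_ge0 //.
  by rewrite sumr_ge0 // => *; exact: normc_ge0.
have M_gt0 : 0 < M by rewrite ltr_pwDl // sumr_ge0 // => z _; exact: normc_ge0.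
exists (rho ^+ size zs / M); first by rewrite divr_gt0 // exprn_gt0.
move=> t t_small.
have [ws qE] := monic_prod_roots (monicDZl t%:C p_monic h_small).
set q := p + t%:C *: h in qE *.
have size_ws : size ws = size zs.
  apply/succn_inj; rewrite -(size_prod_XsubC ws id) -(size_prod_XsubC zs id).
  by rewrite -qE -pE size_polyDZl.
have near : {in zs, forall z, exists2 w, w \in ws & normc (z - w) < rho}.
  move=> z zzs; apply: exists_root_near; first exact: ltW.
  have pz : p.[z] = 0 by apply/rootP; rewrite pE root_prod_XsubC.
  rewrite -qE size_ws hornerD hornerZ pz add0r normcM normc_real.
  rewrite ltr_pdivlMr // in t_small.
  by apply: le_lt_trans t_small; rewrite ler_wpM2l ?h_le.
have zs_sep2 : {in zs &, forall z1 z2, normc (z1 - z2) < rho *+ 2 -> z1 = z2}.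
  by move=> z1 z2 z1s z2s d; apply: zs_sep => //; lra.
have [phi [ws_uniq ws_perm phi_near]] :=
  roots_matching zs ws rho zs_uniq size_ws zs_sep2 near.
have root_q w : root q w = (w \in map phi zs).
  by rewrite qE root_prod_XsubC (perm_mem ws_perm).
have outer := outer_root_stable (q_inv t) root_q rho_le zs_sep zs_off phi_near.
rewrite qE pE !one_outer_root_count // (permP ws_perm) count_map.
by rewrite (eq_in_count outer).
Qed.

Lemma reciprocalDZl {T : nzRingType} (p q : {poly T}) (a : T) :
  reciprocal p -> reciprocal (p + q) -> (size q < size p)%N ->
  reciprocal (p + a *: q).
Proof.
move=> [p0 p_sym] [_ pq_sym] q_small.
have size_pq : size (p + q) = size p by rewrite size_polyDl.
have size_paq := size_polyDZl a q_small.
split; first by rewrite -size_poly_gt0 size_paq size_poly_gt0.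
rewrite size_paq => i le_i.
have q_sym : q`_i = q`_((size p).-1 - i).
  by have := pq_sym i; rewrite size_pq !coefD (p_sym i le_i) => /(_ le_i)/addrI.
by rewrite !coefD !coefZ (p_sym i le_i) q_sym.
Qed.

Lemma reciprocal_map {S T : nzRingType} (f : S -> T) (p : {poly S}) :
  injective f -> f 0 = 0 -> reciprocal p -> reciprocal (map_poly f p).
Proof.
move=> f_inj f0 [p0 p_sym]; have size_fp := size_map_inj_poly f_inj f0 p.
split; first by rewrite -size_poly_gt0 size_fp size_poly_gt0.
by rewrite size_fp => i le_i; rewrite !coef_map_id0 // p_sym.
Qed.

Lemma horner_reciprocal {F : fieldType} {p : {poly F}} {x : F} :
  reciprocal p -> x != 0 -> p.[x^-1] * x ^+ (size p).-1 = p.[x].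
Proof.
move=> [p0 p_sym] x0; set n := (size p).-1.
have size_p : size p = n.+1 by rewrite prednK // size_poly_gt0.
rewrite !horner_coef size_p mulr_suml [RHS](reindex_inj rev_ord_inj) /=.
apply: eq_bigr => i _; rewrite subSS.
have le_i : (i <= n)%N by rewrite -ltnS.
rewrite (p_sym i le_i) -mulrA; congr (_ * _).
have -> : x ^+ n = x ^+ (n - i) * x ^+ i by rewrite -exprD subnK.
by rewrite exprVn mulrCA mulVf ?expf_neq0 // mulr1.
Qed.

Lemma reciprocal_rootV {F : fieldType} (p : {poly F}) x :
  reciprocal p -> root p x -> root p x^-1.
Proof.
move=> p_rec; have [-> | x0] := eqVneq x 0; first by rewrite invr0.
rewrite /root -(horner_reciprocal p_rec x0) mulf_eq0.
by rewrite expf_eq0 (negbTE x0) andbF orbF.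
Qed.

Lemma polyRC_rootJ {R : realType} (p : {poly R}) w :
  root (polyRC p) w -> root (polyRC p) w^*.
Proof.
have pJ : map_poly conjc (polyRC p) = polyRC p.
  by rewrite -map_poly_comp; apply: eq_map_poly => x /=; exact: conjc_real.
by move=> /rootP pw; apply/rootP; rewrite -pJ horner_map pw rmorph0.
Qed.

Lemma polyRC_inversion_stable {R : realType} (p : {poly R}) :
  reciprocal p -> inversion_stable_roots (polyRC p).
Proof.
move=> p_rec w /polyRC_rootJ; apply: reciprocal_rootV.
exact: reciprocal_map (@complexI R) (rmorph0 _) p_rec.
Qed.

Lemma itv_locally_constant {R : realType} (P : R -> Prop) (a b : R) : a <= b ->
  (forall x, a <= x <= b ->
     exists2 d, 0 < d & forall y, `|y - x| < d -> (P y <-> P x)) ->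
  P a -> P b.
Proof.
move=> ab P_loc Pa.
pose A (t : R) := a <= t <= b /\ forall e, a <= e <= t -> P e.
have Aa : A a.
  split=> [|e /andP[ae ea]]; first by rewrite lexx ab.
  by have -> : e = a by apply/eqP; rewrite eq_le ae ea.
have A_sup : classical_sets.has_sup A by split; [exists a | exists b => t [/andP[]]].
set s := sup A.
have a_s : a <= s by exact: sup_upper_bound A_sup a Aa.
have s_b : s <= b by apply: ge_sup; [exists a | move=> t [/andP[]]].
have [d d_gt0 Pd] := P_loc s (introT andP (conj a_s s_b)).
have [t At s_t] := sup_adherent d_gt0 A_sup; rewrite -/s in s_t.
have t_s : t <= s by exact: sup_upper_bound A_sup t At.
have [/andP[a_t _] Pt] := At.
have P_below e : a <= e -> e < s + d -> P e.
  move=> a_e e_sd; have [e_t | t_e] := lerP e t; first by apply: Pt; rewrite a_e e_t.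
  have Ps : P s.
    apply/(Pd t); last by apply: Pt; rewrite a_t lexx.
    by rewrite ltr_norml; apply/andP; split; lra.
  by apply/(Pd e) => //; rewrite ltr_norml; apply/andP; split; lra.
have [b_sd | sd_b] := ltrP b (s + d); first exact: P_below.
have : A (s + d / 2).
  split=> [|e /andP[a_e e_sd]]; first by apply/andP; split; lra.
  by apply: P_below; lra.
by move=> /(sup_upper_bound A_sup); rewrite -/s; lra.
Qed.

Lemma polyR_reciprocal {R : realType} (p : {poly int}) :
  reciprocal p -> reciprocal (polyR R p).
Proof. by apply: reciprocal_map => //; exact: intr_inj. Qed.

Lemma size_polyR {R : realType} (p : {poly int}) : size (polyR R p) = size p.
Proof. by apply: size_map_inj_poly => //; exact: intr_inj. Qed.

Lemma polyR_monic (R : realType) {p : {poly int}} :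
  p \is monic -> polyR R p \is monic.
Proof.
move=> /monicP p_monic; rewrite monicE /polyR.
by rewrite (lead_coef_map_inj (@intr_inj R)) // p_monic.
Qed.

Lemma size_polyRC {R : realType} (p : {poly R}) : size (polyRC p) = size p.
Proof. by apply: size_map_inj_poly => //; exact: complexI. Qed.

Section SalemFamily.
Context {R : realType} {f g : {poly int}}.
Hypotheses (f_rec : reciprocal f) (fg_rec : reciprocal (f + g)).
Hypotheses (f_monic : f \is monic) (g_small : (size g < size f)%N).

Let polyR_g_small : (size (polyR R g) < size (polyR R f))%N.
Proof. by rewrite !size_polyR. Qed.

Lemma size_f_eps (e : R) : size (f_eps f g e) = size f.
Proof. by rewrite /f_eps size_polyDZl // size_polyR. Qed.

Lemma f_eps_reciprocal (e : R) : reciprocal (f_eps f g e).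
Proof.
apply: reciprocalDZl polyR_g_small; first exact: polyR_reciprocal.
by rewrite /polyR -rmorphD; exact: polyR_reciprocal.
Qed.

Lemma f_eps_monic (e : R) : f_eps f g e \is monic.
Proof. exact: (monicDZl e (polyR_monic R f_monic) polyR_g_small). Qed.

Lemma polyRC_f_eps_shift (e t : R) :
  polyRC (f_eps f g (e + t)) = polyRC (f_eps f g e) + t%:C *: polyRC (polyR R g).
Proof.
apply/polyP => i; rewrite /f_eps /polyRC /polyR.
rewrite coefD coefZ !coef_map_id0 // !coefD !coefZ !coef_map_id0 //=.
by rewrite -rmorphM -rmorphD mulrDl addrA.
Qed.

Lemma one_outer_root_f_eps (k : R) : 0 <= k ->
  (forall e, 0 <= e <= k -> only_simple_roots (f_eps f g e)) ->
  one_outer_root (polyRC (f_eps f g (0 : R))) ->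
  one_outer_root (polyRC (f_eps f g k)).
Proof.
move=> k_ge0 simple.
apply: (@itv_locally_constant R (fun x => one_outer_root (polyRC (f_eps f g x))))
  => // e e_itv.
have p_monic : polyRC (f_eps f g e) \is monic by rewrite map_monic f_eps_monic.
have h_small : (size (polyRC (polyR R g)) < size (polyRC (f_eps f g e)))%N.
  by rewrite !size_polyRC size_f_eps size_polyR.
have q_inv t : inversion_stable_roots
    (polyRC (f_eps f g e) + t%:C *: polyRC (polyR R g)).
  by rewrite -polyRC_f_eps_shift; exact/polyRC_inversion_stable/f_eps_reciprocal.
have [d d_gt0 near] :=
  one_outer_root_perturb _ _ p_monic h_small (simple e e_itv) q_inv.
by exists d => // y /near; rewrite -polyRC_f_eps_shift subrKC.
Qed.

End SalemFamily.

Theorem lemma3 (R : realType) (f g : {poly int}) (k : nat) :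
  reciprocal f -> Salem R f ->
  (size g < size f)%N ->
  reciprocal (f + g) ->
  (forall eps : R, 0 <= eps <= k%:R -> only_simple_roots (f_eps f g eps)) ->
  reciprocal (f + k%:R *: g) /\ Salem R (f + k%:R *: g).
Proof.
move=> f_rec [f_monic [l [fl l_gt1 _ l_uniq]]] g_small fg_rec simple.
have fk_eps : polyR R (f + k%:R *: g) = f_eps f g k%:R.
  apply/polyP => i; rewrite /f_eps /polyR coefD coefZ !coef_map_id0 //=.
  by rewrite coefD coefZ intrD intrM mulrz_nat.
have [m [fk_m m_gt1 m_uniq]] : one_outer_root (polyRC (polyR R (f + k%:R *: g))).
  rewrite fk_eps; apply: (one_outer_root_f_eps f_rec fg_rec f_monic g_small) => //.
  by rewrite /f_eps scale0r addr0; exists l.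
split; first exact: reciprocalDZl.
split; first exact: (monicDZl _ f_monic g_small).
exists m; split=> //.
by rewrite fk_eps; apply: simple; rewrite ?lexx ?ler0n // -fk_eps.
Qed.
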